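(* Let $(T,D)$ be a predominated tree. (i) $(T,D)$ is MBD critical if and only if there exists a substructure $F\in\mathcal S$ in $T$ such that $D=V(T)\setminus X(F)$. (ii) $(T,D)$ is an atomic MBD critical graph if and only if $T\in\mathcal S$ and $D=V(T)\setminus X(T)$.
   Context: A predominated graph is a pair $(G,D)$ with $G$ a finite simple graph and $D\subseteq V(G)$. In the MBD game on $(G,D)$, Staller and Dominator alternately claim unclaimed vertices of $V(G)$ (including vertices of $D$), Staller first, until all are claimed; Staller wins if she claims all of $N_G[v]$ for some $v\in V(G)\setminus D$, Dominator wins otherwise. $(G,D)$ is MBD critical if Staller wins on $(G,D)$ but Dominator wins on $(G,D\cup\{v\})$ for every $v\in V(G)\setminus D$. $(G,D)$ is atomic MBD critical if it is MBD critical, $D$ is an independent set of $G$, and no vertex of $D$ is isolated in $G$. For a tree $T'$, $S(T')$ is obtained by subdividing each edge of $T'$ exactly once; $\mathcal S=\{S(T'):T'\text{ a tree}\}$ and $X(S(T'))=V(T')$ (with $S(P_1)=P_1$, $X(P_1)=V(P_1)$). $F\in\mathcal S$ is a substructure in $G$ if $F$ is a subgraph of $G$ and $\deg_G(v)=\deg_F(v)$ for all $v\in X(F)$. *)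

From mathcomp Require Import all_boot.
Set Implicit Arguments.
Unset Strict Implicit.
Unset Printing Implicit Defensive.

Section Graphs.
Variable V : finType.
Implicit Types (e : rel V) (D S C : {set V}).

Definition simple_graph e : Prop := irreflexive e /\ symmetric e.
Definition is_connected e : Prop := forall x y : V, connect e x y.
Definition acyclic e : Prop :=
  forall s : seq V, 3 <= size s -> uniq s -> ~~ cycle e s.
Definition is_tree e : Prop :=
  [/\ simple_graph e, 0 < #|V|, is_connected e & acyclic e].

Definition cnbhd e (v : V) : {set V} := [set u | (u == v) || e v u].
Definition deg e (v : V) : nat := #|[set u | e v u]|.

Definition staller_claimed_nbhd e D S : bool :=
  [exists v, (v \notin D) && (cnbhd e v \subset S)].

(* [mbd_from e D n S C sturn]: Staller wins (with optimal play) from the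
   position where C is the set of claimed vertices, S the set claimed by
   Staller, and [sturn] says whether Staller moves next; n is fuel
   (at least the number of unclaimed vertices). *)
Fixpoint mbd_from e D (n : nat) S C (sturn : bool) : bool :=
  if n is n'.+1 then
    if [exists x, x \notin C] then
      if sturn then
        [exists x, (x \notin C) && mbd_from e D n' (x |: S) (x |: C) false]
      else
        [forall x, (x \notin C) ==> mbd_from e D n' S (x |: C) true]
    else staller_claimed_nbhd e D S
  else staller_claimed_nbhd e D S.

Definition staller_wins e D : bool := mbd_from e D #|V| set0 set0 true.
Definition dominator_wins e D : bool := ~~ staller_wins e D.

Definition mbd_critical e D : Prop :=
  staller_wins e D /\ forall v, v \notin D -> dominator_wins e (v |: D).

Definition atomic_mbd_critical e D : Prop :=
  [/\ mbd_critical e D,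
      (forall u w, u \in D -> w \in D -> ~~ e u w) &
      (forall u, u \in D -> exists w, e u w)].
End Graphs.

(* ---------- Subdivision S(T') of a graph (W, f) ----------
   vertices: inl a (original vertices, a : W) and inr {a,b} for each edge ab
   of f (the subdivision vertex of that edge). *)
Section Subdivision.
Variable W : finType.
Variable f : rel W.

Definition sd_valid (z : W + {set W}) : bool :=
  match z with
  | inl _ => true
  | inr A => [exists a, exists b, f a b && (A == [set a; b])]
  end.

Definition sd_edge (z1 z2 : W + {set W}) : bool :=
  match z1, z2 with
  | inl a, inr A => sd_valid (inr A) && (a \in A)
  | inr A, inl a => sd_valid (inr A) && (a \in A)
  | _, _ => false
  end.
End Subdivision.

Section Embeddings.
Variables (V W : finType) (e : rel V) (f : rel W).
Variable phi : W + {set W} -> V.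

Definition sd_subgraph (phi : W + {set W} -> V) : Prop :=
  (forall z1 z2, sd_valid f z1 -> sd_valid f z2 -> phi z1 = phi z2 -> z1 = z2)
  /\ (forall z1 z2, sd_valid f z1 -> sd_valid f z2 -> sd_edge f z1 z2 ->
        e (phi z1) (phi z2)).

Definition F_edge (u w : V) : bool :=
  [exists z1, exists z2,
     [&& sd_valid f z1, sd_valid f z2, sd_edge f z1 z2,
         phi z1 == u & phi z2 == w]].
Definition F_deg (u : V) : nat := #|[set w | F_edge u w]|.

Definition X_of : {set V} := [set phi (inl a) | a : W].

Definition substructure : Prop :=
  sd_subgraph phi /\ forall v, v \in X_of -> deg e v = F_deg v.

Definition sd_iso : Prop :=
  (forall z1 z2, sd_valid f z1 -> sd_valid f z2 -> phi z1 = phi z2 -> z1 = z2)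
  /\ (forall v, exists2 z, sd_valid f z & phi z = v)
  /\ (forall z1 z2, sd_valid f z1 -> sd_valid f z2 ->
        e (phi z1) (phi z2) = sd_edge f z1 z2).
End Embeddings.

(* In a forest on a vertex set A, peeling off a leaf shows that either the
   vertices of A outside D can be covered by disjoint edges (a pairing), or
   A carries a substructure F in S (degrees taken within A) with X(F)
   disjoint from D.  A pairing lets Dominator win by answering every move
   inside its pair.  Against F, Staller claims the subdivision vertex between
   a deepest X-vertex x and its parent: this threatens N[x], so Dominator must
   claim x, and the rest of F is again such a structure.  Conversely, for an
   X-vertex u, pairing every other X-vertex with its subdivision vertex
   towards u lets Dominator win once u is added to D.  If D is moreover independent, a
   vertex outside F would be reached from F through an edge inside D, so F is
   all of T. *)

From mathcomp Require Import all_boot.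
Set Implicit Arguments.
Unset Strict Implicit.
Unset Printing Implicit Defensive.

Section Game.
Variables (V : finType) (e : rel V) (D : {set V}).
Implicit Types (S C : {set V}).

Local Notation claimed := (staller_claimed_nbhd e D).

Lemma claimed_nbhdS S S' : S \subset S' -> claimed S -> claimed S'.
Proof.
move=> sSS' /existsP[v /andP[Dv /subset_trans Nv]].
by apply/existsP; exists v; rewrite Dv Nv.
Qed.

Lemma mbd_from_claimed n S C b : claimed S -> mbd_from e D n S C b.
Proof.
elim: n S C b => [|n IHn] S C b clS //=.
case: ifP => // /existsP[x Cx]; case: b.
  apply/existsP; exists x; rewrite Cx /=; apply: IHn.
  exact: claimed_nbhdS (subsetUr _ _) clS.
by apply/forallP => y; apply/implyP => _; apply: IHn.
Qed.

Lemma card_setC_setU1 (z : V) C : z \notin C -> #|~: (z |: C)|.+1 = #|~: C|.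
Proof.
move=> Cz; rewrite (cardsD1 z (~: C)) inE Cz add1n; congr _.+1.
by apply: eq_card => y; rewrite !inE negb_or andbC.
Qed.

Lemma mbd_from_staller_move n S C x : x \notin C -> #|~: C| <= n ->
  mbd_from e D n.-1 (x |: S) (x |: C) false -> mbd_from e D n S C true.
Proof.
move=> Cx; case: n => [|n] leCn win; first by move: leCn; rewrite -(card_setC_setU1 Cx).
rewrite /=; have -> : [exists x, x \notin C] by apply/existsP; exists x.
by apply/existsP; exists x; rewrite Cx.
Qed.

Lemma mbd_from_staller_claims n S C x : x \notin C -> #|~: C| <= n ->
  claimed (x |: S) -> mbd_from e D n S C true.
Proof.
by move=> Cx leCn clS; apply: (mbd_from_staller_move Cx leCn); apply: mbd_from_claimed.
Qed.

Lemma mbd_from_staller_completes n S C x : #|~: C| <= n ->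
  (x \in S) || (x \notin C) -> claimed (x |: S) -> mbd_from e D n S C true.
Proof.
move=> leCn /orP[Sx|Cx] clS; last exact: mbd_from_staller_claims Cx leCn clS.
by apply: mbd_from_claimed; rewrite (setUidPr _) ?sub1set in clS.
Qed.

(* Claiming [c] creates the threat of claiming [x]: Dominator must answer [x]. *)
Lemma mbd_from_staller_threat n S C c x : c \notin C -> x \notin C -> x != c ->
  #|~: C| <= n -> claimed (x |: (c |: S)) ->
  mbd_from e D n.-2 (c |: S) (x |: (c |: C)) true -> mbd_from e D n S C true.
Proof.
move=> Cc Cx xc leCn clx win.
have cCx : x \notin c |: C by rewrite !inE negb_or xc.
case: n leCn win => [|n] leCn win; first by move: leCn; rewrite -(card_setC_setU1 Cc).
apply: (mbd_from_staller_move Cc leCn) => /=.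
have leCn' : #|~: (c |: C)| <= n by rewrite -ltnS (card_setC_setU1 Cc).
case: n leCn leCn' win => [|n] _ leCn' win; first by move: leCn'; rewrite -(card_setC_setU1 cCx).
rewrite /=; have -> : [exists x, x \notin c |: C] by apply/existsP; exists x.
apply/forallP => z; apply/implyP => Cz; case: (eqVneq z x) => [-> //|zx].
have zCx : x \notin z |: (c |: C) by rewrite !inE !negb_or eq_sym zx xc Cx.
apply: (mbd_from_staller_claims zCx); first by rewrite -ltnS (card_setC_setU1 Cz).
by apply: claimed_nbhdS clx; rewrite setUS.
Qed.

(* Staller to move; [S] are her vertices among the claimed ones [C].  [X] is
   a rooted tree with parent map [par] (decreasing [rk]) whose edge from [x]
   to [par x] passes through the private vertex [con x]; no vertex of [X] or
   [con X] belongs to Dominator, and every other neighbour of a vertex of [X]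
   is already in [S]. *)
Record staller_config (X : {set V}) (r : V) (par con : V -> V) (rk : V -> nat) S C
  : Prop := StallerConfig {
  sc_root : r \in X;
  sc_notin_D : forall x, x \in X -> x \notin D;
  sc_X : forall x, x \in X -> x \in C -> x \in S;
  sc_par : forall x, x \in X -> x != r -> par x \in X;
  sc_rank : forall x, x \in X -> x != r -> rk (par x) < rk x;
  sc_con : forall x, x \in X -> x != r -> con x \in C -> con x \in S;
  sc_con_inj : {in X &, forall x y, x != r -> y != r -> con x = con y -> x = y};
  sc_con_notin : forall x, x \in X -> x != r -> con x \notin X;
  sc_nbhd : forall x w, x \in X -> e x w ->
    [\/ w \in S, x != r /\ w = con x
      | exists y, [/\ y \in X, y != r, par y = x & w = con y]]
}.

Section Config.
Variables (X : {set V}) (r : V) (par con : V -> V) (rk : V -> nat) (S C : {set V}).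
Hypothesis cfg : staller_config X r par con rk S C.
Variable x : V.
Hypotheses (Xx : x \in X) (xr : x != r).
Hypothesis rk_max : forall y, y \in X -> y != r -> rk y <= rk x.

Lemma staller_config_leaf w : e x w -> w \in S \/ w = con x.
Proof.
case/(sc_nbhd cfg Xx) => [|[]|[y [Xy yr par_y ->]]]; [by left|by right|].
by have := sc_rank cfg Xy yr; rewrite par_y ltnNge rk_max.
Qed.

Lemma staller_config_prune :
  staller_config (X :\ x) r par con rk (con x |: S) (x |: (con x |: C)).
Proof.
have con_notX y : y \in X -> y != r -> con y \notin X := sc_con_notin cfg (x:=y).
split.
- by rewrite !inE (sc_root cfg) eq_sym xr.
- by move=> y /setD1P[_ /(sc_notin_D cfg)].
- move=> y /setD1P[yx Xy]; rewrite !inE (negbTE yx) /=.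
  case/orP => [/eqP yc|/(sc_X cfg Xy) ->]; last by rewrite orbT.
  by move: (con_notX x Xx xr); rewrite -yc Xy.
- move=> y /setD1P[yx Xy] yr; rewrite !inE (sc_par cfg Xy yr) andbT.
  apply/eqP => par_y; have := sc_rank cfg Xy yr.
  by rewrite par_y ltnNge rk_max.
- by move=> y /setD1P[_ Xy]; apply: (sc_rank cfg).
- move=> y /setD1P[_ Xy] yr; rewrite !inE => /or3P[/eqP cx|/eqP->|/(sc_con cfg Xy yr)->].
  + by move: (con_notX y Xy yr); rewrite cx Xx.
  + by rewrite eqxx.
  + by rewrite orbT.
- by move=> y1 y2 /setD1P[_ Xy1] /setD1P[_ Xy2]; apply: (sc_con_inj cfg).
- by move=> y /setD1P[_ Xy] yr; rewrite !inE negb_and con_notX ?orbT.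
- move=> y w /setD1P[yx Xy] yw.
  case: (sc_nbhd cfg Xy yw) => [Sw|[yr ->]|[z [Xz zr par_z ->]]].
  + by apply: Or31; rewrite inE Sw orbT.
  + exact: Or32.
  + case: (eqVneq z x) => [->|zx]; first by apply: Or31; rewrite setU11.
    by apply: Or33; exists z; rewrite !inE zx Xz.
Qed.
End Config.

Lemma staller_config_wins n X r par con rk S C :
  staller_config X r par con rk S C -> #|~: C| <= n -> mbd_from e D n S C true.
Proof.
move: {2}#|X| (leqnn #|X|) => k; elim: k n X S C => [|k IHk] n X S C leXk cfg leCn.
  by move: (sc_root cfg); move: leXk; rewrite leqn0 cards_eq0 => /eqP->; rewrite inE.
have free x : x \in X -> (x \in S) || (x \notin C).
  by move=> Xx; case: (boolP (x \in C)) => [/(sc_X cfg Xx)->|]; rewrite ?orbT.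
case: (boolP [exists x, (x \in X) && (x != r)]) => [/existsP[x0 x0P]|only_r]; last first.
  have r_in := sc_root cfg; apply: (mbd_from_staller_completes leCn (free r r_in)).
  apply/existsP; exists r; rewrite (sc_notin_D cfg r_in) /=; apply/subsetP => w.
  rewrite !inE => /orP[-> //|/(sc_nbhd cfg r_in)[-> | [] | [y [Xy yr _ _]]]];
    rewrite ?orbT ?eqxx //.
  by case/existsP: only_r; exists y; rewrite Xy yr.
case: (@arg_maxnP _ x0 (fun y => (y \in X) && (y != r)) rk x0P) => x /andP[Xx xr] max_x.
have rk_max y : y \in X -> y != r -> rk y <= rk x by move=> Xy yr; apply: max_x; rewrite Xy.
have leaf := staller_config_leaf cfg Xx rk_max.
have claim S' : x \in S' -> con x \in S' -> S \subset S' -> claimed S'.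
  move=> Sx Sc sSS'; apply/existsP; exists x; rewrite (sc_notin_D cfg Xx) /=.
  apply/subsetP => w; rewrite inE => /orP[/eqP->//|/leaf[/(subsetP sSS')//|->//]].
have free_c : (con x \in S) || (con x \notin C).
  by case: (boolP (con x \in C)) => [/(sc_con cfg Xx xr)->|]; rewrite ?orbT.
have xc : x != con x by apply: contraNneq (sc_con_notin cfg Xx xr) => <-.
case: (boolP (x \in S)) => Sx.
  apply: (mbd_from_staller_completes leCn free_c).
  by apply: claim; rewrite ?setU11 ?subsetUr // setU1r.
case: (boolP (con x \in S)) => Sc.
  apply: (mbd_from_staller_completes leCn (free x Xx)).
  by apply: claim; rewrite ?setU11 ?subsetUr // setU1r.
have Cc : con x \notin C by move: free_c; rewrite (negbTE Sc).
have Cx : x \notin C by move: (free x Xx); rewrite (negbTE Sx).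
have cCx : x \notin con x |: C by rewrite !inE negb_or xc.
apply: (mbd_from_staller_threat Cc Cx xc leCn).
  apply: claim; [exact: setU11|by rewrite setU1r // setU11|].
  exact: subset_trans (subsetUr _ _) (subsetUr _ _).
apply: (IHk _ (X :\ x)).
- by move: leXk; rewrite (cardsD1 x X) Xx.
- exact: staller_config_prune.
- by move: leCn; rewrite -(card_setC_setU1 Cc) -(card_setC_setU1 cCx); case: n => [|[|n]].
Qed.

Definition pairing (M : {set V}) (mate : V -> V) :=
  forall u, u \in M -> [/\ mate u \in M, mate (mate u) = u, mate u != u & e u (mate u)].

Section Pairing.
Variables (M : {set V}) (mate : V -> V).
Hypothesis pairM : pairing M mate.
Hypothesis covM : forall v, v \notin D -> v \in M.

Definition pairs_split S := forall u, u \in M -> u \in S -> mate u \notin S.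
Definition pairs_blocked S C := forall u, u \in M -> u \in S -> mate u \in C.

Lemma pairs_split_not_claimed S : pairs_split S -> ~~ claimed S.
Proof.
move=> splitS; apply/existsP => -[v /andP[Dv /subsetP NvS]].
have [_ _ _ vm] := pairM (covM Dv).
have Sv : v \in S by apply: NvS; rewrite inE eqxx.
by move: (splitS v (covM Dv) Sv); rewrite NvS // inE vm orbT.
Qed.

(* Dominator answers each Staller move [x] by [mate x] whenever possible. *)
Lemma pairing_strategy n S C :
  pairs_split S -> pairs_blocked S C -> ~~ mbd_from e D n S C true.
Proof.
elim/ltn_ind: n S C => -[|n] IHn S C splitS blockS /=; first exact: pairs_split_not_claimed.
case: ifP => _; last exact: pairs_split_not_claimed.
apply/existsP => -[x /andP[Cx win]].
have splitxS : pairs_split (x |: S).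
  move=> u Mu; rewrite !inE negb_or => /orP[/eqP Eux|Su].
    subst u; have [Mm mmK mx _] := pairM Mu.
    rewrite mx /=; apply: contra Cx => Sm.
    by move: (blockS _ Mm Sm); rewrite mmK.
  have Cm := blockS u Mu Su; rewrite (splitS u Mu Su) andbT.
  by apply: contraNneq Cx => <-.
move: win; case: n IHn => [|n] IHn /=; apply/negP.
  exact: pairs_split_not_claimed.
case: ifP => [/existsP[y0 y0P]|_]; last exact: pairs_split_not_claimed.
set y := if (x \in M) && (mate x \notin x |: C) then mate x else y0.
have Cy : y \notin x |: C by rewrite /y; case: ifP => // /andP[].
have blocky : pairs_blocked (x |: S) (y |: (x |: C)).
  move=> u Mu /setU1P[Eux|Su]; last by rewrite !inE (blockS u Mu Su) !orbT.
  subst u; rewrite /y; case: ifP => [_|/negbT]; first exact: setU11.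
  by rewrite Mu /= negbK => xCm; rewrite inE xCm orbT.
apply/negP => /forallP /(_ y); rewrite Cy /=; apply/negP.
exact: IHn.
Qed.

Lemma dominator_wins_pairing : dominator_wins e D.
Proof. by apply: pairing_strategy => u _; rewrite inE. Qed.
End Pairing.
End Game.

Section Forest.
Variables (V : finType) (e : rel V).
Hypotheses (e_irr : irreflexive e) (e_sym : symmetric e) (e_acyc : acyclic e).
Implicit Types (A D B X M : {set V}).

Lemma exists_leaf A a : a \in A ->
  exists2 u, u \in A & exists y, {in A, forall w, e u w -> w = y}.
Proof.
move=> Aa.
pose P n := [exists t : n.-tuple V, if tval t is x :: s
  then [&& uniq (x :: s), all [in A] (x :: s) & path e x s] else false].
have P1 : P 1 by apply/existsP; exists [tuple a] => /=; rewrite Aa.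
have P_le n : P n -> n <= #|V|.
  move=> /existsP[[[|x s] size_s]] // /and3P[uniq_s _ _].
  by rewrite -(eqP size_s) -(card_uniqP uniq_s) max_card.
case: (ex_maxnP (ex_intro _ 1 P1) P_le) => m /existsP[[[|u s] size_s]] //.
move=> /and3P[/= /andP[s'u uniq_s] /= /andP[Au A_s] path_us] maxm.
exists u => //; exists (head u s) => w Aw uw.
have wu : w != u by apply: contraTneq uw => ->; rewrite e_irr.
case: (boolP (w \in s)) => [s_w|s'w]; last first.
  suff /maxm : P m.+1 by rewrite ltnn.
  have size_wus : size [:: w, u & s] == m.+1 by rewrite -(eqP size_s).
  apply/existsP; exists (Tuple size_wus) => /=.
  by rewrite inE negb_or wu s'w s'u uniq_s Aw Au A_s e_sym uw path_us.
(* [u] starts a longest path in [A]; a neighbour further along would close a cycle *)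
have ltis : index w s < size s by rewrite index_mem.
case Ei: (index w s) ltis => [|i] ltis; first by rewrite -nth0 -Ei nth_index.
exfalso.
have size_t : size (take i.+2 s) = i.+2 by rewrite size_takel.
have last_t : last u (take i.+2 s) = w by rewrite (last_nth u) size_t /= nth_take // -Ei nth_index.
suff /negP[] : ~~ cycle e (u :: take i.+2 s).
  by rewrite /cycle rcons_path take_path // last_t e_sym uw.
apply: e_acyc; first by rewrite /= size_t.
by rewrite /= take_uniq // andbT; apply: contra s'u; apply: mem_take.
Qed.

Definition induced B : rel V := fun x y => [&& e x y, x \in B & y \in B].

Lemma induced_sym B : symmetric (induced B).
Proof. by move=> x y; rewrite /induced e_sym; case: (x \in B); case: (y \in B); rewrite ?andbF. Qed.

Lemma common_neighbour_disconnected B p u w : p \notin B -> u != w ->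
  e p u -> e p w -> ~ connect (induced B) u w.
Proof.
move=> Bp uw pu pw /connectP[q path_q].
case: (shortenP path_q) => -[|y q'] path_q' uniq_q' _ last_q.
  by move: uw; rewrite last_q eqxx.
have Bu : u \in B by case/andP: path_q' => /and3P[].
have B_q : all [in B] (y :: q').
  by elim: (y :: q') (u) path_q' => [//|z t IHt] x /= /andP[/and3P[_ _ ->] /IHt].
have uniq_pq : uniq [:: p, u, y & q'].
  rewrite cons_uniq uniq_q' andbT inE negb_or; apply/andP; split.
    by apply: contraNneq Bp => ->.
  by apply: contra Bp => q_p; move/allP: B_q; apply.
move/negP: (@e_acyc [:: p, u, y & q'] isT uniq_pq); apply.
rewrite /cycle /= pu rcons_path; move: last_q => /= <-; rewrite (e_sym w p) pw andbT.
by apply: sub_path path_q' => a b /and3P[].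
Qed.

(* A rooted copy [F] of some S(T') on vertices of [A], with X(F) = [X]
   disjoint from [D]: [par] is the parent map of T' towards the root [r]
   (it decreases [rk]) and [con x] the subdivision vertex of the edge
   {x, par x}.  By [rs_nbhd] every neighbour in [A] of a vertex of [X] lies
   in [F], which is the substructure condition. *)
Record rooted_sub A D X (r : V) (par con : V -> V) (rk : V -> nat) : Prop :=
  RootedSub {
  rs_root : r \in X;
  rs_X : forall x, x \in X -> x \in A;
  rs_notin_D : forall x, x \in X -> x \notin D;
  rs_par : forall x, x \in X -> x != r -> par x \in X;
  rs_rank : forall x, x \in X -> x != r -> rk (par x) < rk x;
  rs_con : forall x, x \in X -> x != r -> con x \in A;
  rs_edge_con : forall x, x \in X -> x != r -> e x (con x);
  rs_edge_par : forall x, x \in X -> x != r -> e (con x) (par x);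
  rs_con_inj : {in X &, forall x y, x != r -> y != r -> con x = con y -> x = y};
  rs_con_notin : forall x, x \in X -> x != r -> con x \notin X;
  rs_nbhd : forall x w, x \in X -> w \in A -> e x w ->
    (x != r /\ w = con x) \/ exists y, [/\ y \in X, y != r, par y = x & w = con y]
}.

Definition rs_body X r (con : V -> V) := X :|: [set con y | y in X :\ r].

Lemma rooted_sub_connect A D X r par con rk : rooted_sub A D X r par con rk ->
  forall x, x \in X -> connect (induced (rs_body X r con)) x r.
Proof.
move=> Hs x; move: {2}(rk x) (leqnn (rk x)) => k; elim: k x => [|k IHk] x le_xk Xx;
  case: (eqVneq x r) => [-> //|xr].
- by move: (rs_rank Hs Xx xr); rewrite ltnNge (leq_trans le_xk).
- have body_X z : z \in X -> z \in rs_body X r con by rewrite inE => ->.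
  have body_c : con x \in rs_body X r con by rewrite inE imset_f ?orbT // !inE xr.
  have Xp := rs_par Hs Xx xr.
  apply: (connect_trans (connect1 (_ : induced _ x (con x)))).
    by rewrite /induced (rs_edge_con Hs Xx xr) body_c body_X.
  apply: (connect_trans (connect1 (_ : induced _ (con x) (par x)))).
    by rewrite /induced (rs_edge_par Hs Xx xr) body_c body_X.
  by apply: IHk Xp; rewrite -ltnS (leq_trans (rs_rank Hs Xx xr)).
Qed.

Lemma rooted_sub_widen A' D' A D X r par con rk : rooted_sub A' D' X r par con rk ->
  A' \subset A -> D \subset D' -> (forall x w, x \in X -> w \in A -> e x w -> w \in A') ->
  rooted_sub A D X r par con rk.
Proof.
move=> [? XA' D'X ? ? conA' ? ? ? ? nbhd] /subsetP sA /subsetP sD closedX; split=> //.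
- by move=> x /XA' /sA.
- by move=> x /D'X; apply: contra; apply: sD.
- by move=> x Xx xr; apply/sA/conA'.
- by move=> x w Xx Aw xw; apply: nbhd (closedX x w Xx Aw xw) xw.
Qed.

Lemma rooted_sub_change_D A D D' X r par con rk : rooted_sub A D X r par con rk ->
  (forall x, x \in X -> x \notin D') -> rooted_sub A D' X r par con rk.
Proof. by case=> *; split. Qed.

Lemma rooted_sub_setD1 A D D' X r par con rk u : rooted_sub (A :\ u) D' X r par con rk ->
  D \subset D' -> {in X, forall x, ~~ e x u} -> rooted_sub A D X r par con rk.
Proof.
move=> Hs sDD' Xnu; apply: (rooted_sub_widen Hs (subD1set A u) sDD').
move=> x w Xx Aw xw; rewrite !inE Aw andbT.
by apply: contraNneq (Xnu x Xx) => <-.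
Qed.

Lemma rooted_sub1 A D u : u \in A -> u \notin D -> {in A, forall w, ~~ e u w} ->
  rooted_sub A D [set u] u id id (fun=> 0).
Proof.
move=> Au Du u_isol.
split=> [|x /set1P->|x /set1P->|x /set1P->|x /set1P->|x /set1P->|x /set1P->|x /set1P->
        |x1 x2 /set1P-> _|x /set1P->|x w /set1P-> Aw uw]; rewrite ?inE ?eqxx //.
by case/negP: (u_isol w Aw).
Qed.

Definition covering_pairing A D M mate :=
  [/\ pairing e M mate, M \subset A & forall v, v \in A -> v \notin D -> v \in M].

Lemma covering_pairing0 D : exists M mate, covering_pairing set0 D M mate.
Proof.
by exists set0, id; split; [move=> u; rewrite inE|exact: sub0set|move=> v; rewrite inE].
Qed.

Lemma covering_pairing_widen A' D' A D M mate : covering_pairing A' D' M mate ->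
  A' \subset A -> (forall v, v \in A -> v \notin D -> v \in A' /\ v \notin D') ->
  covering_pairing A D M mate.
Proof.
move=> [pairM sMA' covM] sA'A H; split=> //; first exact: subset_trans sA'A.
by move=> v Av Dv; have [? ?] := H v Av Dv; apply: covM.
Qed.

Lemma covering_pairing_add_edge A D M mate u y : covering_pairing (A :\ u :\ y) D M mate ->
  u \in A -> y \in A -> e u y ->
  covering_pairing A D (u |: (y |: M))
    (fun z => if z == u then y else if z == y then u else mate z).
Proof.
move=> [pairM sMA covM] Au Ay uy.
have uM : u \notin M by apply/negP => /(subsetP sMA); rewrite !inE eqxx andbF.
have yM : y \notin M by apply/negP => /(subsetP sMA); rewrite !inE eqxx.
have yu : y != u by apply: contraTneq uy => ->; rewrite e_irr.
split.
- move=> z; rewrite !inE => /or3P[/eqP->|/eqP->|Mz].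
  + by rewrite !eqxx /= (negbTE yu) ?eqxx /= ?yu ?uy ?orbT.
  + by rewrite !eqxx /= (negbTE yu) ?eqxx /= eq_sym ?yu e_sym ?uy ?orbT.
  + have [Mm mmK mz zm] := pairM z Mz.
    have [zu zy] : z != u /\ z != y by split; [apply: contraNneq uM|apply: contraNneq yM] => <-.
    have [mu my] : mate z != u /\ mate z != y.
      by split; [apply: contraNneq uM|apply: contraNneq yM] => <-.
    by rewrite (negbTE zu) (negbTE zy) (negbTE mu) (negbTE my) mmK Mm !orbT.
- apply/subsetP => z; rewrite !inE => /or3P[/eqP->//|/eqP->//|/(subsetP sMA)].
  by rewrite !inE => /and3P[].
- move=> v Av Dv; rewrite !inE; case: (eqVneq v u) => //= vu.
  by case: (eqVneq v y) => //= vy; apply: covM; rewrite // !inE vu vy.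
Qed.

Section Graft.
Variables (A D X : {set V}) (r : V) (par con : V -> V) (rk : V -> nat) (u y : V).
Hypotheses (Au : u \in A) (Ay : y \in A) (Du : u \notin D) (uy : e u y).
Hypothesis leaf_u : {in A, forall w, e u w -> w = y}.
Hypothesis Hs : rooted_sub (A :\ u :\ y) D X r par con rk.

Let A'A z : z \in A :\ u :\ y -> z \in A. Proof. by rewrite !inE => /and3P[]. Qed.
Let A'u : u \notin A :\ u :\ y. Proof. by rewrite !inE eqxx andbF. Qed.
Let A'y : y \notin A :\ u :\ y. Proof. by rewrite !inE eqxx. Qed.
Let Xu : u \notin X. Proof. by apply: contra A'u; apply: (rs_X Hs). Qed.
Let Xy : y \notin X. Proof. by apply: contra A'y; apply: (rs_X Hs). Qed.
Let neq_u z : z \in X -> (z == u) = false.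
Proof. by move=> Xz; apply: contraNF Xu => /eqP <-. Qed.
Let Xnu z : z \in X -> ~~ e z u.
Proof.
move=> Xz; apply: contraNN Xy => zu.
by rewrite -(leaf_u (A'A (rs_X Hs Xz))) // e_sym.
Qed.

Lemma rooted_sub_leaf_closed x w : x \in X -> w \in A -> e x w -> w != y ->
  w \in A :\ u :\ y.
Proof.
move=> Xx Aw xw wy; rewrite !inE wy Aw andbT.
by apply: contraNneq (Xnu Xx) => <-.
Qed.

(* Two paths from [x] and [z] to the root would close a cycle through [y]. *)
Lemma rooted_sub_unique_neighbour x z : x \in X -> z \in X -> e x y -> e z y -> z = x.
Proof.
move=> Xx Xz xy zy; apply/eqP/negP => /negP zx.
apply: (@common_neighbour_disconnected (rs_body X r con) y x z).
- rewrite inE negb_or Xy /=; apply/imsetP => -[z' /setD1P[z'r Xz'] yz'].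
  by move: (rs_con Hs Xz' z'r); rewrite -yz' (negbTE A'y).
- by rewrite eq_sym.
- by rewrite e_sym.
- by rewrite e_sym.
- apply: connect_trans (rooted_sub_connect Hs Xx) _.
  by rewrite (sym_connect_sym (induced_sym _)) (rooted_sub_connect Hs Xz).
Qed.

Lemma rooted_sub_graft x : x \in X -> e x y ->
  rooted_sub A D (u |: X) r
    (fun z => if z == u then x else par z) (fun z => if z == u then y else con z)
    (fun z => if z == u then (rk x).+1 else rk z).
Proof.
move=> Xx xy.
have ur : u != r by apply: contraNneq Xu => ->; apply: (rs_root Hs).
have conA' z : z \in X -> z != r -> con z \in A :\ u :\ y := rs_con Hs (x := z).
have con_neq_u z : z \in X -> z != r -> (con z == u) = false.
  by move=> Xz zr; have := conA' z Xz zr; rewrite !inE => /and3P[_ /negbTE].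
split.
- by rewrite inE (rs_root Hs) orbT.
- by move=> z /setU1P[->|/(rs_X Hs)/A'A].
- by move=> z /setU1P[->|/(rs_notin_D Hs)].
- move=> z /setU1P[->|Xz] zr; first by rewrite eqxx inE Xx orbT.
  by rewrite neq_u // inE (rs_par Hs Xz zr) orbT.
- move=> z /setU1P[->|Xz] zr; first by rewrite eqxx neq_u.
  by rewrite !neq_u ?(rs_rank Hs) ?(rs_par Hs).
- by move=> z /setU1P[->|Xz] zr; rewrite ?eqxx // neq_u // A'A ?conA'.
- by move=> z /setU1P[->|Xz] zr; rewrite ?eqxx // neq_u // (rs_edge_con Hs).
- move=> z /setU1P[->|Xz] zr; first by rewrite eqxx /= e_sym.
  by rewrite neq_u // (rs_edge_par Hs).
- move=> z1 z2 /setU1P[->|Xz1] /setU1P[->|Xz2] z1r z2r //; rewrite ?eqxx ?neq_u //.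
  + by move=> yc; move: (conA' z2 Xz2 z2r); rewrite -yc (negbTE A'y).
  + by move=> cy; move: (conA' z1 Xz1 z1r); rewrite cy (negbTE A'y).
  + exact: (rs_con_inj Hs).
- move=> z /setU1P[->|Xz] zr.
    rewrite eqxx !inE negb_or (negbTE Xy) andbT.
    by apply: contraTneq uy => ->; rewrite e_irr.
  by rewrite neq_u // !inE con_neq_u //= (rs_con_notin Hs).
- move=> z w /setU1P[->|Xz] Aw zw; first by left; rewrite eqxx (leaf_u Aw zw).
  rewrite neq_u //; case: (eqVneq w y) zw => [->|wy] zw; last first.
    case: (rs_nbhd Hs Xz (rooted_sub_leaf_closed Xz Aw zw wy) zw) => [|[y' [Xy' y'r <- ->]]].
      by left.
    by right; exists y'; rewrite inE Xy' orbT neq_u.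
  by rewrite (rooted_sub_unique_neighbour Xx Xz xy zw); right; exists u; rewrite setU11 eqxx.
Qed.
End Graft.

Lemma rooted_sub_add_leaf A D X r par con rk u y :
  u \in A -> y \in A -> u \notin D -> e u y -> {in A, forall w, e u w -> w = y} ->
  rooted_sub (A :\ u :\ y) D X r par con rk ->
  exists X' r' par' con' rk', rooted_sub A D X' r' par' con' rk'.
Proof.
move=> Au Ay Du uy leaf_u Hs.
case: (boolP [exists x in X, e x y]) => [/exists_inP[x Xx xy]|noxy].
  by do 5 eexists; exact: rooted_sub_graft Au Ay Du uy leaf_u Hs x Xx xy.
exists X, r, par, con, rk.
apply: (rooted_sub_widen Hs (subset_trans (subD1set _ _) (subD1set _ _)) (subxx D)).
move=> x w Xx Aw xw; apply: (rooted_sub_leaf_closed leaf_u Hs Xx Aw xw).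
by apply: contraNneq noxy => wy; apply/exists_inP; exists x; rewrite -?wy.
Qed.

Lemma covering_pairing_add_leaf A D M mate u y :
  u \in A -> y \in A -> u \in D -> e u y -> covering_pairing (A :\ u) (y |: D) M mate ->
  exists M' mate', covering_pairing A D M' mate'.
Proof.
move=> Au Ay Du uy [pairM sMA covM].
have uA v : v \in A -> v \notin D -> v \in A :\ u.
  by move=> Av; rewrite !inE Av andbT; apply: contraNneq => ->.
case: (boolP (y \in M)) => My.
  exists M, mate; split=> //; first exact: subset_trans sMA (subD1set _ _).
  move=> v Av Dv; case: (eqVneq v y) => [-> //|vy].
  by apply: (covM v (uA v Av Dv)); rewrite !inE negb_or vy.
do 2 eexists; apply: (@covering_pairing_add_edge A D M mate u y _ Au Ay uy); split=> //.
  by apply/subsetP => z Mz; rewrite in_setD1 (subsetP sMA z Mz) andbT; apply: contraNneq My => <-.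
by move=> v; rewrite !inE => /and3P[vy vu Av] Dv; apply: covM; rewrite ?inE ?negb_or ?vy ?vu.
Qed.

Lemma pairing_or_rooted_sub A D :
  (exists M mate, covering_pairing A D M mate) \/
  (exists X r par con rk, rooted_sub A D X r par con rk).
Proof.
move: {2}#|A| (leqnn #|A|) => n; elim: n A D => [|n IHn] A D leAn.
  by left; move: leAn; rewrite leqn0 cards_eq0 => /eqP->; apply: covering_pairing0.
case: (set_0Vmem A) => [->|[a Aa]]; first by left; apply: covering_pairing0.
have [u Au [y leaf_u]] := exists_leaf Aa.
have leAun : #|A :\ u| <= n by move: leAn; rewrite (cardsD1 u A) Au.
have sA'A : A :\ u \subset A := subD1set A u.
case: (boolP [exists w in A, e u w]) => [/exists_inP[w Ay uy]|isol_u].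
  have Ew := leaf_u w Ay uy; subst w.
  case: (boolP (u \in D)) => Du.
    case: (IHn (A :\ u) (y |: D) leAun) => [[M [mate cov]]|[X [r [par [con [rk Hs]]]]]].
      by left; apply: covering_pairing_add_leaf cov.
    right; exists X, r, par, con, rk; apply: (rooted_sub_setD1 Hs (subsetUr _ _)).
    move=> x Xx; rewrite e_sym; apply/negP => /(leaf_u x (subsetP sA'A _ (rs_X Hs Xx))) xy.
    by move: (rs_notin_D Hs Xx); rewrite xy setU11.
  have leA'n : #|A :\ u :\ y| <= n := leq_trans (subset_leq_card (subD1set _ _)) leAun.
  case: (IHn (A :\ u :\ y) D leA'n) => [[M [mate cov]]|[X [r [par [con [rk Hs]]]]]].
    by left; do 2 eexists; exact: (covering_pairing_add_edge cov Au Ay uy).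
  by right; apply: rooted_sub_add_leaf Hs.
have u_isol : {in A, forall w, ~~ e u w}.
  by move=> w Aw; apply: contraNN isol_u => uw; apply/exists_inP; exists w.
case: (boolP (u \in D)) => Du; last by right; do 5 eexists; apply: rooted_sub1 Du u_isol.
case: (IHn (A :\ u) D leAun) => [[M [mate cov]]|[X [r [par [con [rk Hs]]]]]].
  left; exists M, mate; apply: (covering_pairing_widen cov sA'A) => v Av Dv.
  by rewrite !inE Av andbT; split=> //; apply: contraNneq Dv => ->.
right; exists X, r, par, con, rk; apply: (rooted_sub_setD1 Hs (subxx D)).
by move=> x Xx; rewrite e_sym u_isol // (subsetP sA'A) // (rs_X Hs).
Qed.
End Forest.

Lemma rooted_sub_staller_wins (V : finType) (e : rel V) D X r par con rk :
  rooted_sub e setT D X r par con rk -> staller_wins e D.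
Proof.
case=> r_in _ XD par_in rank _ _ _ con_inj con_notin nbhd.
apply: (@staller_config_wins _ _ _ _ X r par con rk); last by rewrite setC0 cardsT.
split=> //; try by move=> x; rewrite inE.
by move=> x w Xx xw; case: (nbhd x w Xx (in_setT w) xw) => ?; [apply: Or32|apply: Or33].
Qed.

(* Each non-root [x] of [X] is paired with [con x]; only the root is left. *)
Lemma rooted_sub_dominator_wins (V : finType) (e : rel V) D X r par con rk :
  symmetric e -> rooted_sub e setT D X r par con rk -> dominator_wins e (r |: ~: X).
Proof.
move=> e_sym Hs.
pose mate z := if z \in X then con z else odflt z [pick x in X :\ r | con x == z].
have mate_con y : y \in X :\ r -> mate (con y) = y.
  move=> /[dup] Xry /setD1P[yr Xy]; rewrite /mate (negbTE (rs_con_notin Hs Xy yr)).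
  case: pickP => [x /andP[/setD1P[xr Xx] /eqP cxy]|/(_ y)] /=; last by rewrite Xry eqxx.
  exact: (rs_con_inj Hs).
apply: (@dominator_wins_pairing _ _ _ (X :\ r :|: [set con y | y in X :\ r]) mate).
- move=> z /setUP[/[dup] Xrz /setD1P[zr Xz]|/imsetP[y Xry ->]].
    have mz : mate z = con z by rewrite /mate Xz.
    rewrite mz mate_con // inE imset_f ?orbT // (rs_edge_con Hs) //.
    by split=> //; apply: contraNneq (rs_con_notin Hs Xz zr) => ->.
  have /setD1P[yr Xy] := Xry.
  rewrite mate_con // inE Xry /mate Xy e_sym (rs_edge_con Hs) //.
  by split=> //; apply: contraNneq (rs_con_notin Hs Xy yr) => <-.
- by move=> v; rewrite !inE negb_or negbK => /andP[vr Xv]; rewrite vr Xv.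
Qed.

Lemma sd_edge_inl_inr (W : finType) (f : rel W) a B :
  sd_edge f (inl a) (inr B) = sd_valid f (inr B) && (a \in B).
Proof. by []. Qed.

Lemma sd_edge_inr_inl (W : finType) (f : rel W) a B :
  sd_edge f (inr B) (inl a) = sd_valid f (inr B) && (a \in B).
Proof. by []. Qed.

Section SubdivisionOfRootedSub.
Variables (V : finType) (e : rel V).
Hypothesis e_sym : symmetric e.
Variables (D X : {set V}) (r : V) (par con : V -> V) (rk : V -> nat).
Hypothesis Hs : rooted_sub e setT D X r par con rk.

Definition rs_base := {x : V | x \in X}.
Let root : rs_base := exist _ r (rs_root Hs).
Definition rs_parent (a : rs_base) : rs_base := insubd a (par (val a)).

Lemma val_rs_parent (a : rs_base) : val a != r -> val (rs_parent a) = par (val a).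
Proof. by move=> ar; rewrite /rs_parent insubdK // (rs_par Hs (valP a) ar). Qed.

Lemma rank_rs_parent (a : rs_base) : val a != r -> rk (val (rs_parent a)) < rk (val a).
Proof. by move=> ar; rewrite val_rs_parent // (rs_rank Hs (valP a) ar). Qed.

Lemma rs_parent_neq (a : rs_base) : val a != r -> rs_parent a != a.
Proof. by move=> ar; apply: contraTneq (rank_rs_parent ar) => ->; rewrite ltnn. Qed.

Definition rs_rel : rel rs_base := fun a b =>
  ((val a != r) && (rs_parent a == b)) || ((val b != r) && (rs_parent b == a)).

(* The value on sets that are not edges of [rs_rel] is irrelevant. *)
Definition rs_embed (z : rs_base + {set rs_base}) : V :=
  match z with
  | inl a => val a
  | inr B => if [pick c in B | (val c != r) && (rs_parent c \in B)] is Some c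
             then con (val c) else r
  end.

Lemma rs_embed_edge (c : rs_base) : val c != r ->
  rs_embed (inr [set c; rs_parent c]) = con (val c).
Proof.
move=> cr; rewrite /rs_embed; case: pickP => [c' /and3P[cB c'r pB]|/(_ c)]; last first.
  by rewrite !inE !eqxx cr orbT.
move: cB pB; rewrite !inE => /orP[/eqP-> //|/eqP c'p] /orP[/eqP pc'|/eqP pp].
- have := rank_rs_parent c'r; rewrite pc' c'p => /(ltn_trans (rank_rs_parent cr)).
  by rewrite ltnn.
- by move: (rs_parent_neq c'r); rewrite pp c'p eqxx.
Qed.

Lemma sd_valid_rs_rel (B : {set rs_base}) : sd_valid rs_rel (inr B) ->
  exists c : rs_base, [/\ val c != r, B = [set c; rs_parent c] & rs_embed (inr B) = con (val c)].
Proof.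
move=> /existsP[a /existsP[b /andP[/orP[|] /andP[ar /eqP pab] /eqP ->]]].
- by exists a; rewrite -pab rs_embed_edge.
- by exists b; rewrite setUC -pab rs_embed_edge.
Qed.

Lemma sd_valid_rs_parent (c : rs_base) : val c != r -> sd_valid rs_rel (inr [set c; rs_parent c]).
Proof.
move=> cr; apply/existsP; exists c; apply/existsP; exists (rs_parent c).
by rewrite /rs_rel cr !eqxx.
Qed.

Lemma rs_rel_sym : symmetric rs_rel.
Proof. by move=> a b; rewrite /rs_rel orbC. Qed.

Lemma connect_rs_root (a : rs_base) : connect rs_rel a root.
Proof.
move: {2}(rk (val a)) (leqnn (rk (val a))) => k; elim: k a => [|k IHk] a le_ak;
  case: (eqVneq (val a) r) => [ar|ar]; try by rewrite (_ : a = root) ?connect0 //; apply: val_inj.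
- by move: (rank_rs_parent ar); rewrite ltnNge (leq_trans le_ak).
- apply: connect_trans (connect1 (_ : rs_rel a (rs_parent a))) (IHk _ _).
    by rewrite /rs_rel ar eqxx.
  by rewrite -ltnS (leq_trans (rank_rs_parent ar)).
Qed.

Lemma rs_rel_irr : irreflexive rs_rel.
Proof.
move=> a; rewrite /rs_rel orbb; apply/negP => /andP[ar /eqP pa].
by move: (rs_parent_neq ar); rewrite pa eqxx.
Qed.

(* The vertex of largest rank on a cycle would have two parents. *)
Lemma rs_rel_acyclic : acyclic rs_rel.
Proof.
move=> s size_s uniq_s; apply/negP => cycle_s.
have [m s_m] : exists m, m \in s.
  by case: s size_s {uniq_s cycle_s} => [|m s] //; exists m; rewrite inE eqxx.
case: (@arg_maxnP _ m [in s] (fun a => rk (val a)) s_m) => x s_x max_x.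
case: (rot_to s_x) => i s' rot_s.
have uniq_xs : uniq (x :: s') by rewrite -rot_s rot_uniq.
have cycle_xs : cycle rs_rel (x :: s') by rewrite -rot_s rot_cycle.
have size_xs : 3 <= size (x :: s') by rewrite -rot_s size_rot.
have le_x z : z \in x :: s' -> rk (val z) <= rk (val x) by rewrite -rot_s mem_rot => /max_x.
case: s' {rot_s} uniq_xs cycle_xs size_xs le_x => [|a [|b t]] // uniq_xs cycle_xs _ le_x.
have par_x z : z \in x :: a :: b :: t -> rs_rel x z -> rs_parent x = z.
  move=> xs_z /orP[/andP[_ /eqP //]|/andP[zr /eqP pz]].
  by have := le_x z xs_z; rewrite -pz leqNgt rank_rs_parent.
move: cycle_xs; rewrite /cycle rcons_path => /andP[/andP[xa _] lx].
have pa : rs_parent x = a by apply: par_x; rewrite ?inE ?eqxx ?orbT.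
have pl : rs_parent x = last a (b :: t).
  by apply: par_x; [rewrite inE mem_last orbT|rewrite rs_rel_sym].
move: uniq_xs => /and3P[_ ].
by rewrite {1}(_ : a = last b t) ?mem_last // -pa pl.
Qed.


Lemma rs_rel_tree : is_tree rs_rel.
Proof.
split; [by split; [exact: rs_rel_irr|exact: rs_rel_sym]|by apply/card_gt0P; exists root| |].
  move=> a b; apply: connect_trans (connect_rs_root a) _.
  by rewrite (sym_connect_sym rs_rel_sym) connect_rs_root.
exact: rs_rel_acyclic.
Qed.

Lemma rs_embed_inj z1 z2 : sd_valid rs_rel z1 -> sd_valid rs_rel z2 ->
  rs_embed z1 = rs_embed z2 -> z1 = z2.
Proof.
have X_con (a : rs_base) B : sd_valid rs_rel (inr B) -> rs_embed (inl a) <> rs_embed (inr B).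
  move=> /sd_valid_rs_rel[c [cr _ ->]] /= ac.
  by move: (rs_con_notin Hs (valP c) cr); rewrite -ac (valP a).
case: z1 => [a|B1]; case: z2 => [b|B2] v1 v2 E.
- by congr inl; apply: val_inj.
- by case: (X_con a B2 v2 E).
- by case: (X_con b B1 v1 (esym E)).
- move: E; have [c1 [c1r -> ->]] := sd_valid_rs_rel v1; have [c2 [c2r -> ->]] := sd_valid_rs_rel v2.
  by move=> /(rs_con_inj Hs (valP c1) (valP c2) c1r c2r) /val_inj ->.
Qed.

Lemma rs_embed_edge_base (a : rs_base) B : sd_valid rs_rel (inr B) -> a \in B ->
  e (rs_embed (inl a)) (rs_embed (inr B)).
Proof.
move=> /sd_valid_rs_rel[c [cr -> ->]] /=; rewrite !inE => /orP[/eqP->|/eqP->].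
- exact: (rs_edge_con Hs (valP c) cr).
- by rewrite val_rs_parent // e_sym (rs_edge_par Hs (valP c) cr).
Qed.

Lemma rs_embed_sd_edge z1 z2 : sd_valid rs_rel z1 -> sd_valid rs_rel z2 ->
  sd_edge rs_rel z1 z2 -> e (rs_embed z1) (rs_embed z2).
Proof.
case: z1 => [a|B1]; case: z2 => [b|B2] //= _ _ /andP[vB aB].
- exact: rs_embed_edge_base.
- by rewrite e_sym; apply: rs_embed_edge_base.
Qed.

Lemma X_of_rs_embed : X_of rs_embed = X.
Proof.
apply/setP => x; apply/imsetP/idP => [[a _ ->]|Xx]; first exact: (valP a).
by exists (exist _ x Xx).
Qed.

Lemma F_edge_rs_embed (a : rs_base) w : e (val a) w -> F_edge rs_rel rs_embed (val a) w.
Proof.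
move=> aw; apply/existsP; exists (inl a).
case: (rs_nbhd Hs (valP a) (in_setT w) aw) => [[ar ->]|[y [Xy yr par_y ->]]].
- apply/existsP; exists (inr [set a; rs_parent a]).
  have vB := sd_valid_rs_parent ar.
  apply/and5P; split=> //; first by rewrite sd_edge_inl_inr vB !inE eqxx.
  by rewrite rs_embed_edge.
- pose b : rs_base := exist _ y Xy.
  have pb : rs_parent b = a by apply: val_inj; rewrite val_rs_parent.
  apply/existsP; exists (inr [set b; rs_parent b]).
  have vB := sd_valid_rs_parent (yr : val b != r).
  apply/and5P; split=> //; first by rewrite sd_edge_inl_inr vB pb !inE eqxx orbT.
  by rewrite rs_embed_edge.
Qed.

Lemma rooted_sub_substructure : substructure e rs_rel rs_embed.
Proof.
split; first by split; [exact: rs_embed_inj|exact: rs_embed_sd_edge].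
move=> x /imsetP[a _ ->]; rewrite /deg /F_deg; apply: eq_card => w; rewrite !inE.
apply/idP/idP; first exact: F_edge_rs_embed.
move=> /existsP[z1 /existsP[z2 /and5P[v1 v2 z12 /eqP <- /eqP <-]]].
exact: rs_embed_sd_edge.
Qed.

Lemma rs_embed_edgeE (a : rs_base) B : sd_valid rs_rel (inr B) ->
  e (rs_embed (inl a)) (rs_embed (inr B)) = (a \in B).
Proof.
move=> vB; apply/idP/idP; last exact: rs_embed_edge_base.
move: (vB) => /sd_valid_rs_rel[c [cr -> ->]] /= ac.
case: (rs_nbhd Hs (valP a) (in_setT _) ac) => [[ar E]|[y [Xy yr par_y E]]].
  by rewrite (val_inj (rs_con_inj Hs (valP a) (valP c) ar cr (esym E))) !inE eqxx.
have Eyc := rs_con_inj Hs Xy (valP c) yr cr (esym E).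
have -> : a = rs_parent c by apply: val_inj; rewrite val_rs_parent // -Eyc par_y.
by rewrite !inE eqxx orbT.
Qed.

Lemma rs_embed_base_edge (a b : rs_base) : e (rs_embed (inl a)) (rs_embed (inl b)) = false.
Proof.
apply/negbTE/negP => /= ab.
case: (rs_nbhd Hs (valP a) (in_setT _) ab) => [[ar E]|[y [Xy yr _ E]]].
  by move: (rs_con_notin Hs (valP a) ar); rewrite -E (valP b).
by move: (rs_con_notin Hs Xy yr); rewrite -E (valP b).
Qed.

Lemma rooted_sub_sd_iso : (forall v, v \in rs_body X r con) ->
  {in X :\ r &, forall y1 y2, ~~ e (con y1) (con y2)} -> sd_iso e rs_rel rs_embed.
Proof.
move=> cover indep; split; first exact: rs_embed_inj.
split.
  move=> v; case/setUP: (cover v) => [Xv|/imsetP[y /setD1P[yr Xy] ->]].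
    by exists (inl (exist _ v Xv)).
  pose b : rs_base := exist _ y Xy.
  by exists (inr [set b; rs_parent b]); [exact: sd_valid_rs_parent|rewrite rs_embed_edge].
case=> [a|B1] [b|B2] v1 v2.
- exact: rs_embed_base_edge.
- by rewrite rs_embed_edgeE // sd_edge_inl_inr v2.
- by rewrite e_sym rs_embed_edgeE // sd_edge_inr_inl v1.
- have [c1 [c1r _ ->]] := sd_valid_rs_rel v1; have [c2 [c2r _ ->]] := sd_valid_rs_rel v2.
  by apply/negbTE/indep; rewrite !inE ?c1r ?c2r ?(valP c1) ?(valP c2).
Qed.
End SubdivisionOfRootedSub.

Section RootedTree.
Variables (W : finType) (f : rel W).
Hypothesis f_tree : is_tree f.
Variable v : W.

Let f_irr : irreflexive f. Proof. by case: f_tree => [[]]. Qed.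
Let f_sym : symmetric f. Proof. by case: f_tree => [[]]. Qed.

Fixpoint ball (n : nat) : {set W} :=
  if n is n'.+1 then ball n' :|: [set a | [exists b in ball n', f a b]] else [set v].

Lemma ball_last p n x : x \in ball n -> path f x p -> last x p \in ball (n + size p).
Proof.
elim: p n x => [|y p IHp] n x x_n /=; first by rewrite addn0.
case/andP => xy path_p; rewrite addnS -addSn; apply: IHp path_p.
by rewrite /= inE; apply/orP; right; rewrite inE; apply/existsP; exists x; rewrite x_n f_sym.
Qed.

Lemma exists_ball a : exists n, a \in ball n.
Proof.
have [_ _ f_conn _] := f_tree; have /connectP[p path_p ->] := f_conn v a.
by exists (0 + size p); apply: ball_last; rewrite ?inE.
Qed.

Definition depth a := ex_minn (exists_ball a).

Lemma depth_ball a : a \in ball (depth a).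
Proof. by rewrite /depth; case: ex_minnP. Qed.

Lemma depth_min a n : a \in ball n -> depth a <= n.
Proof. by rewrite /depth; case: ex_minnP => m _ min_m /min_m. Qed.

Lemma depth_eq0 a : (depth a == 0) = (a == v).
Proof.
apply/idP/idP => [/eqP d0|/eqP ->]; last by rewrite -leqn0 depth_min // inE.
by move: (depth_ball a); rewrite d0 inE.
Qed.

Definition tree_parent a := odflt a [pick b | f a b && (depth b < depth a)].

Lemma tree_parentP a : a != v -> f a (tree_parent a) /\ depth (tree_parent a) < depth a.
Proof.
move=> av; rewrite /tree_parent; case: pickP => [b /andP[ab lt_ba]|no_b] //=.
exfalso; have := depth_ball a; case Ea: (depth a) => [|m].
  by move: av; rewrite -depth_eq0 Ea.
rewrite /= inE => /orP[m_a|]; first by have := depth_min m_a; rewrite Ea ltnn.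
rewrite inE => /existsP[b /andP[m_b ab]].
by move: (no_b b); rewrite ab Ea ltnS depth_min.
Qed.

Lemma connect_induced_root (B : {set W}) : (forall y, y \in B -> y != v -> tree_parent y \in B) ->
  forall x, x \in B -> connect (induced f B) x v.
Proof.
move=> closedB x; move: {2}(depth x) (leqnn (depth x)) => k.
elim: k x => [|k IHk] x le_xk Bx; case: (eqVneq x v) => [-> //|xv];
  have [x_px lt_px] := tree_parentP xv.
  by move: (leq_trans lt_px le_xk).
apply: connect_trans (connect1 (_ : induced f B x (tree_parent x))) (IHk _ _ _).
- by rewrite /induced x_px Bx closedB.
- by rewrite -ltnS (leq_trans lt_px).
- exact: closedB.
Qed.

(* Otherwise [a - c] and the two paths to the root through parents close a cycle. *)
Lemma tree_edge_parent a c : f a c ->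
  (a != v /\ tree_parent a = c) \/ (c != v /\ tree_parent c = a).
Proof.
wlog le_ac : a c / depth a <= depth c.
  move=> wlog_ac ac; case: (leqP (depth a) (depth c)) => [le_ac|/ltnW le_ca].
    exact: wlog_ac.
  by rewrite f_sym in ac; case: (wlog_ac c a le_ca ac) => ?; [right|left].
move=> ac.
have cv : c != v.
  apply: contraTneq ac => cv; move: le_ac; rewrite cv (eqP (_ : depth v == 0)) ?depth_eq0 //.
  by rewrite leqn0 depth_eq0 => /eqP->; rewrite f_irr.
have [c_pc lt_pc] := tree_parentP cv.
case: (eqVneq (tree_parent c) a) => [E|pca]; first by right.
exfalso; have [_ _ _ f_acyc] := f_tree.
pose B := [set y | (depth y < depth c) || (y == a)].
have closedB y : y \in B -> y != v -> tree_parent y \in B.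
  move=> By yv; have [_ lt_py] := tree_parentP yv; rewrite inE.
  move: By; rewrite inE => /orP[lt_yc|/eqP ya]; first by rewrite (ltn_trans lt_py lt_yc).
  by rewrite ya in lt_py *; rewrite (leq_trans lt_py le_ac).
apply: (@common_neighbour_disconnected _ f f_sym f_acyc B c a (tree_parent c)).
- by rewrite inE ltnn eq_sym; apply: contraTneq ac => ->; rewrite f_irr.
- by rewrite eq_sym.
- by rewrite f_sym.
- done.
- apply: connect_trans (connect_induced_root closedB _) _; first by rewrite inE eqxx orbT.
  rewrite (sym_connect_sym (induced_sym f_sym B)).
  by apply: connect_induced_root; rewrite // inE lt_pc.
Qed.
End RootedTree.

Section RootedSubOfSubstructure.
Variables (V W : finType) (e : rel V) (f : rel W) (phi : W + {set W} -> V).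
Hypotheses (f_tree : is_tree f) (Fsub : substructure e f phi).
Variable v : W.

Let f_sym : symmetric f. Proof. by case: f_tree => [[]]. Qed.
Let phi_inj {z1 z2} : sd_valid f z1 -> sd_valid f z2 -> phi z1 = phi z2 -> z1 = z2.
Proof. by case: Fsub => [[]] + _ _; apply. Qed.
Let phi_edge {z1 z2} : sd_valid f z1 -> sd_valid f z2 -> sd_edge f z1 z2 -> e (phi z1) (phi z2).
Proof. by case: Fsub => [[_]] + _; apply. Qed.
Let phi_inl_inj a b : phi (inl a) = phi (inl b) -> a = b.
Proof. by move/(@phi_inj (inl a) (inl b) isT isT) => [->]. Qed.

Local Notation parent := (tree_parent f_tree v).

Definition sub_inv (x : V) : W := odflt v [pick a | phi (inl a) == x].

Lemma sub_invK a : sub_inv (phi (inl a)) = a.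
Proof.
rewrite /sub_inv; case: pickP => [b /eqP/phi_inl_inj //|/(_ a)].
by rewrite eqxx.
Qed.

Definition sub_parent x := phi (inl (parent (sub_inv x))).
Definition sub_con x := phi (inr [set sub_inv x; parent (sub_inv x)]).
Definition sub_depth x := depth f_tree v (sub_inv x).

Lemma sd_valid_parent a : a != v -> sd_valid f (inr [set a; parent a]).
Proof.
move=> av; apply/existsP; exists a; apply/existsP; exists (parent a).
by have [ap _] := tree_parentP f_tree av; rewrite ap eqxx.
Qed.

Lemma sub_con_inj : {in X_of phi &, forall x y, x != phi (inl v) -> y != phi (inl v) ->
  sub_con x = sub_con y -> x = y}.
Proof.
move=> _ _ /imsetP[a _ ->] /imsetP[b _ ->] av bv.
have [{}av {}bv] : a != v /\ b != v by split; [apply: contraNneq av|apply: contraNneq bv] => ->.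
rewrite /sub_con !sub_invK => /(phi_inj (sd_valid_parent av) (sd_valid_parent bv)) [EB].
have [_ lt_a] := tree_parentP f_tree av; have [_ lt_b] := tree_parentP f_tree bv.
have : a \in [set b; parent b] by rewrite -EB !inE eqxx.
rewrite !inE => /orP[/eqP-> //|/eqP Eab].
have : b \in [set a; parent a] by rewrite EB !inE eqxx.
rewrite !inE => /orP[/eqP-> //|/eqP Eba].
rewrite -Eab in lt_b; rewrite -Eba in lt_a.
by move: (ltn_trans lt_a lt_b); rewrite ltnn.
Qed.

(* The degree condition of a substructure forces every neighbour of an
   X-vertex to be one of its F-neighbours, hence a subdivision vertex. *)
Lemma substructure_nbhd a w : e (phi (inl a)) w ->
  exists2 c, f a c & w = phi (inr [set a; c]).
Proof.
move=> aw.
have sub_F : [set w | F_edge f phi (phi (inl a)) w] \subset [set w | e (phi (inl a)) w].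
  apply/subsetP => w'; rewrite !inE => /existsP[z1 /existsP[z2 /and5P[v1 v2 z12 /eqP <- /eqP <-]]].
  exact: phi_edge.
have Xa : phi (inl a) \in X_of phi by apply: imset_f.
have /(_ w) := subset_cardP (esym (Fsub.2 _ Xa)) sub_F; rewrite !inE aw.
move=> /existsP[z1 /existsP[z2 /and5P[v1 v2 z12 /eqP E1 /eqP <-]]].
have Ez1 := phi_inj v1 (isT : sd_valid f (inl a)) E1; subst z1.
case: z2 v2 z12 => [//|B] /existsP[b1 /existsP[b2 /andP[b12 /eqP EB]]] /andP[_].
rewrite EB !inE => /orP[/eqP Eb1|/eqP Eb2]; subst.
- by exists b2.
- by exists b1; [rewrite f_sym|rewrite setUC].
Qed.

Lemma substructure_rooted_sub :
  rooted_sub e setT (~: X_of phi) (X_of phi) (phi (inl v)) sub_parent sub_con sub_depth.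
Proof.
have X_phi a : phi (inl a) \in X_of phi by apply: imset_f.
have X_inl x : x \in X_of phi -> exists a, x = phi (inl a) by move/imsetP => [a _ ->]; exists a.
have neq_v a : phi (inl a) != phi (inl v) -> a != v by apply: contraNneq => ->.
split=> //.
- by move=> x Xx; rewrite inE negbK.
- by move=> _ /X_inl[a ->] _; rewrite /sub_parent X_phi.
- move=> _ /X_inl[a ->] /neq_v av; rewrite /sub_depth /sub_parent !sub_invK.
  by case: (tree_parentP f_tree av).
- move=> _ /X_inl[a ->] /neq_v av; rewrite /sub_con sub_invK.
  apply: phi_edge (sd_valid_parent av) _ => //.
  by rewrite sd_edge_inl_inr sd_valid_parent // !inE eqxx.
- move=> _ /X_inl[a ->] /neq_v av; rewrite /sub_con /sub_parent sub_invK.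
  apply: phi_edge (sd_valid_parent av) _ _ => //.
  by rewrite sd_edge_inr_inl sd_valid_parent // !inE eqxx orbT.
- exact: sub_con_inj.
- move=> _ /X_inl[a ->] /neq_v av; apply/imsetP => -[b _].
  by rewrite /sub_con sub_invK => /(phi_inj (z2 := inl b) (sd_valid_parent av) isT).
- move=> _ w /X_inl[a ->] _ /substructure_nbhd[c ac ->].
  case: (tree_edge_parent f_tree v ac) => [[av pa]|[cv pc]].
  + left; split; last by rewrite /sub_con sub_invK pa.
    exact: contra_neq (@phi_inl_inj _ _) av.
  + right; exists (phi (inl c)); split=> //.
    * exact: contra_neq (@phi_inl_inj _ _) cv.
    * by rewrite /sub_parent sub_invK pc.
    * by rewrite /sub_con sub_invK pc setUC.
Qed.
End RootedSubOfSubstructure.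

Section Criticality.
Variables (V : finType) (e : rel V).
Hypothesis e_tree : is_tree e.

Let e_irr : irreflexive e. Proof. by case: e_tree => [[]]. Qed.
Let e_sym : symmetric e. Proof. by case: e_tree => [[]]. Qed.
Let e_acyc : acyclic e. Proof. by case: e_tree. Qed.
Let e_conn : is_connected e. Proof. by case: e_tree. Qed.

Lemma mbd_critical_rooted_sub D : mbd_critical e D ->
  exists X r par con rk, rooted_sub e setT D X r par con rk /\ D = ~: X.
Proof.
case=> st_wins crit.
case: (pairing_or_rooted_sub e_irr e_sym e_acyc setT D) =>
  [[M [mate [pairM _ covM]]]|[X [r [par [con [rk Hs]]]]]].
  have := dominator_wins_pairing pairM (fun v => covM v (in_setT v)).
  by rewrite /dominator_wins st_wins.
exists X, r, par, con, rk; split=> //; apply/setP => x; rewrite inE.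
apply/idP/idP => [Dx|Xx]; first by apply: contraL Dx; apply: (rs_notin_D Hs).
apply/negPn/negP => Dx; case/negP: (crit x Dx).
apply: rooted_sub_staller_wins (rooted_sub_change_D Hs _) => y Xy.
by rewrite !inE negb_or (rs_notin_D Hs Xy) andbT; apply: contraNneq Xx => <-.
Qed.

Lemma mbd_critical_substructure D : mbd_critical e D ->
  exists (W : finType) (f : rel W) (phi : W + {set W} -> V),
    [/\ is_tree f, substructure e f phi & D = ~: X_of phi].
Proof.
move=> /mbd_critical_rooted_sub[X [r [par [con [rk [Hs ->]]]]]].
exists (rs_base X), (@rs_rel _ X r par), (@rs_embed _ X r par con).
split; [exact: (rs_rel_tree Hs)|exact: (rooted_sub_substructure e_sym Hs)|].
by rewrite X_of_rs_embed.
Qed.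

Lemma substructure_mbd_critical (W : finType) (f : rel W) (phi : W + {set W} -> V) :
  is_tree f -> substructure e f phi -> mbd_critical e (~: X_of phi).
Proof.
move=> f_tree Fsub; split.
  have [_ /card_gt0P[v _] _ _] := f_tree.
  exact: rooted_sub_staller_wins (substructure_rooted_sub f_tree Fsub v).
move=> u; rewrite inE negbK => /imsetP[a _ ->].
exact: rooted_sub_dominator_wins e_sym (substructure_rooted_sub f_tree Fsub a).
Qed.

Lemma connect_cut_edge (B : {set V}) x y : connect e x y -> x \in B -> y \notin B ->
  exists u w, [/\ u \in B, w \notin B & e u w].
Proof.
move=> /connectP[p path_p ->]; elim: p x path_p => [|z p IHp] x /= path_p Bx; first by rewrite Bx.
case/andP: path_p => xz path_p; case: (boolP (z \in B)) => Bz; first exact: IHp.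
by move=> _; exists x, z.
Qed.

(* With [D] independent, a vertex outside [rs_body] would be reached from
   the root through an edge between two vertices of [D]. *)
Lemma rooted_sub_cover X r par con rk : rooted_sub e setT (~: X) X r par con rk ->
  {in ~: X &, forall u w, ~~ e u w} -> forall v, v \in rs_body X r con.
Proof.
move=> Hs indep v; apply/contraT => bv.
have br : r \in rs_body X r con by rewrite inE (rs_root Hs).
have [u [w [bu bw uw]]] := connect_cut_edge (e_conn r v) br bv.
have Xw : w \notin X by apply: contra bw; rewrite inE => ->.
case/setUP: bu => [Xu|/imsetP[y /setD1P[yr Xy] Eu]].
  case: (rs_nbhd Hs Xu (in_setT w) uw) => [[ur Ew]|[y [Xy yr _ Ew]]];
    by case/negP: bw; rewrite inE Ew imset_f ?orbT // !inE ?ur ?yr.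
have := indep u w; rewrite !inE Eu (rs_con_notin Hs Xy yr) -Eu uw.
by move=> /(_ isT Xw).
Qed.

Lemma atomic_mbd_critical_sd_iso D : atomic_mbd_critical e D ->
  exists (W : finType) (f : rel W) (phi : W + {set W} -> V),
    [/\ is_tree f, sd_iso e f phi & D = ~: X_of phi].
Proof.
case=> /mbd_critical_rooted_sub[X [r [par [con [rk [Hs DX]]]]]] + _; subst D => indep.
exists (rs_base X), (@rs_rel _ X r par), (@rs_embed _ X r par con).
split; [exact: (rs_rel_tree Hs)| |by rewrite X_of_rs_embed].
apply: (rooted_sub_sd_iso e_sym Hs (rooted_sub_cover Hs indep)).
move=> y1 y2 /setD1P[y1r Xy1] /setD1P[y2r Xy2].
by apply: indep; rewrite inE ?(rs_con_notin Hs).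
Qed.

Lemma sd_iso_substructure (W : finType) (f : rel W) (phi : W + {set W} -> V) :
  sd_iso e f phi -> substructure e f phi.
Proof.
move=> [phi_inj [phi_onto phi_edge]].
split; first by split=> // z1 z2 v1 v2; rewrite phi_edge.
move=> _ /imsetP[a _ ->]; apply: eq_card => w; rewrite !inE.
apply/idP/existsP => [aw|[z1 /existsP[z2 /and5P[v1 v2 z12 /eqP <- /eqP <-]]]].
  have [z vz Ez] := phi_onto w; exists (inl a); apply/existsP; exists z.
  by rewrite vz -phi_edge // Ez aw !eqxx.
by rewrite phi_edge.
Qed.

Lemma sd_iso_atomic_mbd_critical (W : finType) (f : rel W) (phi : W + {set W} -> V) :
  is_tree f -> sd_iso e f phi -> atomic_mbd_critical e (~: X_of phi).
Proof.
move=> f_tree iso; have [_ [phi_onto phi_edge]] := iso.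
have D_sd u : u \in ~: X_of phi -> exists2 B, sd_valid f (inr B) & u = phi (inr B).
  rewrite inE => Xu; have [[a|B] vB Eu] := phi_onto u; last by exists B.
  by move: Xu; rewrite -Eu imset_f.
split; first exact: substructure_mbd_critical (sd_iso_substructure iso).
  by move=> _ _ /D_sd[B1 v1 ->] /D_sd[B2 v2 ->]; rewrite phi_edge.
move=> _ /D_sd[B vB ->]; have /existsP[a /existsP[b /andP[_ /eqP EB]]] := vB.
by exists (phi (inl a)); rewrite phi_edge // sd_edge_inr_inl vB EB !inE eqxx.
Qed.
End Criticality.

Theorem theorem4p6 (V : finType) (e : rel V) (D : {set V}) :
  is_tree e ->
  (mbd_critical e D <->
     exists (W : finType) (f : rel W) (phi : W + {set W} -> V),
       [/\ is_tree f, substructure e f phi & D = ~: X_of phi])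
  /\
  (atomic_mbd_critical e D <->
     exists (W : finType) (f : rel W) (phi : W + {set W} -> V),
       [/\ is_tree f, sd_iso e f phi & D = ~: X_of phi]).
Proof.
move=> e_tree; split; split.
- exact: mbd_critical_substructure.
- by move=> [W [f [phi [f_tree Fsub ->]]]]; move: Fsub; apply: substructure_mbd_critical.
- exact: atomic_mbd_critical_sd_iso.
- by move=> [W [f [phi [f_tree iso ->]]]]; move: iso; apply: sd_iso_atomic_mbd_critical.
Qed.
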